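(* Let $\boldsymbol{\Xi} = \begin{bmatrix}\boldsymbol{\alpha}_1 & \boldsymbol{\alpha}_2 & \boldsymbol{\alpha}_3\\ \boldsymbol{\beta}_1 & \boldsymbol{\beta}_2 & \boldsymbol{\beta}_3\end{bmatrix}\in\mathbb{R}^{6\times 3}$ (with $\boldsymbol{\alpha}_j,\boldsymbol{\beta}_j\in\mathbb{R}^3$) satisfy $\Vert\boldsymbol{\alpha}_1\Vert\neq 0$ and $\boldsymbol{\alpha}_1\times\boldsymbol{\alpha}_2\neq\boldsymbol{0}$, and let $\boldsymbol{\Xi}=\boldsymbol{S}\boldsymbol{U}$ be its unique $SU$-decomposition, with $\boldsymbol{S}=\begin{bmatrix}\boldsymbol{R} & \boldsymbol{0}\\ [\boldsymbol{p}]_\times\boldsymbol{R} & \boldsymbol{R}\end{bmatrix}$ and $\boldsymbol{R}=[\boldsymbol{r}_1\ \boldsymbol{r}_2\ \boldsymbol{r}_3]$. Then: (1) $\boldsymbol{r}_1$ is parallel to the screw axis of $\boldsymbol{\xi}_1=(\boldsymbol{\alpha}_1;\boldsymbol{\beta}_1)$; (2) $\boldsymbol{r}_3$ is parallel to the common normal of the screw axes of $\boldsymbol{\xi}_1$ and $\boldsymbol{\xi}_2=(\boldsymbol{\alpha}_2;\boldsymbol{\beta}_2)$; (3) $\boldsymbol{p}$ lies on the screw axis of $\boldsymbol{\xi}_1$; (4) $\boldsymbol{p}$ is the intersection point of the screw axis of $\boldsymbol{\xi}_1$ with the common normal of the screw axes of $\boldsymbol{\xi}_1$ and $\boldsymb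ol{\xi}_2$.
   Context: For $\boldsymbol{a}\in\mathbb{R}^3$, $[\boldsymbol{a}]_\times$ denotes the skew-symmetric matrix with $[\boldsymbol{a}]_\times\boldsymbol{b}=\boldsymbol{a}\times\boldsymbol{b}$. A screw-transformation matrix is a $6\times6$ matrix $\begin{bmatrix}\boldsymbol{R} & \boldsymbol{0}\\ [\boldsymbol{p}]_\times\boldsymbol{R} & \boldsymbol{R}\end{bmatrix}$ with $\boldsymbol{R}\in SO(3)$, $\boldsymbol{p}\in\mathbb{R}^3$. An $SU$-decomposition of $\boldsymbol{\Xi}$ is a factorization $\boldsymbol{\Xi}=\boldsymbol{S}\boldsymbol{U}$ with $\boldsymbol{S}$ a screw-transformation matrix and $\boldsymbol{U}=\begin{bmatrix}\boldsymbol{U}_1\\ \boldsymbol{U}_2\end{bmatrix}$, where $\boldsymbol{U}_1,\boldsymbol{U}_2$ are $3\times3$ upper-triangular with $(\boldsymbol{U}_1)_{11}>0$, $(\boldsymbol{U}_1)_{22}>0$; it exists and is unique under the stated conditions. For a screw $\boldsymbol{\xi}=(\boldsymbol{\alpha};\boldsymbol{\beta})\in\mathbb{R}^6$ with $\boldsymbol{\alpha}\neq\boldsymbol{0}$, its screw axis is the line $\{\boldsymbol{p}_\perp + t\,\boldsymbol{e} : t\in\mathbb{R}\}$ in $\mathbb{R}^3$, where $\boldsymbol{e}=\boldsymbol{\alpha}/\Vert\boldsymbol{\alpha}\Vert$ and $\boldsymbol{p}_\perp = (\boldsymbol{\alpha}\times\boldsymbol{\beta})/\Vert\boldsymbol{\alpha}\Vert^2$.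 The common normal of two non-parallel lines is the unique line that intersects both lines perpendicularly. *)

From HB Require Import structures.
From mathcomp Require Import all_boot all_order all_algebra.
From mathcomp Require Import reals.
Set Implicit Arguments. Unset Strict Implicit. Unset Printing Implicit Defensive.
Import Order.TTheory GRing.Theory Num.Theory.
Local Open Scope ring_scope.

Section Defs.
Variable R : realType.

Definition i0 : 'I_3 := @Ordinal 3 0 isT.
Definition i1 : 'I_3 := @Ordinal 3 1 isT.
Definition i2 : 'I_3 := @Ordinal 3 2 isT.

Definition c3 (a : 'cV[R]_3) (k : nat) : R := a (inord k) 0.

(* [a]_x : skew-symmetric matrix with [a]_x b = a x b *)
Definition skew (a : 'cV[R]_3) : 'M[R]_3 :=
  \matrix_(i < 3, j < 3)
    match nat_of_ord i, nat_of_ord j with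
    | 0, 1 => - c3 a 2 | 0, 2 => c3 a 1
    | 1, 0 => c3 a 2   | 1, 2 => - c3 a 0
    | 2, 0 => - c3 a 1 | 2, 1 => c3 a 0
    | _, _ => 0
    end.

Definition cross (a b : 'cV[R]_3) : 'cV[R]_3 := skew a *m b.
Definition dot (a b : 'cV[R]_3) : R := \sum_(i < 3) a i 0 * b i 0.
Definition vnorm (a : 'cV[R]_3) : R := Num.sqrt (dot a a).

Definition is_SO3 (M : 'M[R]_3) : Prop := M^T *m M = 1%:M /\ \det M = 1.

Definition upper_tri (M : 'M[R]_3) : Prop := forall i j : 'I_3, (j < i)%N -> M i j = 0.

Definition screw_mx (M : 'M[R]_3) (p : 'cV[R]_3) : 'M[R]_(3 + 3) :=
  block_mx M 0 (skew p *m M) M.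

Definition axis_dir (alpha : 'cV[R]_3) : 'cV[R]_3 := (vnorm alpha)^-1 *: alpha.
Definition axis_point (alpha beta : 'cV[R]_3) : 'cV[R]_3 :=
  (vnorm alpha ^+ 2)^-1 *: cross alpha beta.

Definition on_line (q d x : 'cV[R]_3) : Prop := exists t : R, x = q + t *: d.

Definition parallel (v d : 'cV[R]_3) : Prop := exists k : R, v = k *: d.

Definition common_normal (q1 d1 q2 d2 q d : 'cV[R]_3) : Prop :=
  [/\ d != 0, dot d d1 = 0, dot d d2 = 0,
      exists x, on_line q1 d1 x /\ on_line q d x &
      exists y, on_line q2 d2 y /\ on_line q d y].

End Defs.

(* Reading Xi = S U column by column gives alpha_j = R u_j and
   beta_j = p x alpha_j + R w_j, with u_j, w_j the columns of U1, U2. The screw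
   axis of (a; p x a + v) passes through p + (a x v) / |a|^2 and has direction a.
   By triangularity, alpha_1 and R w_1 are multiples of r_1, so the first axis is
   the line through p along r_1; alpha_2 and R w_2 lie in span(r_1, r_2), so the
   second axis passes through p + n with n along r_3, i.e. along
   alpha_1 x alpha_2. For two non-parallel lines through P and P + n, with n
   orthogonal to both directions, every common normal is parallel to the cross
   product of the directions (hence to r_3) and passes through P; this gives (2)
   and (4). *)

From HB Require Import structures.
From mathcomp Require Import all_boot all_order all_algebra.
From mathcomp Require Import reals.
From mathcomp Require Import ring.
Set Implicit Arguments. Unset Strict Implicit. Unset Printing Implicit Defensive.
Import Order.TTheory GRing.Theory Num.Theory.
Local Open Scope ring_scope.

Lemma inord_i0 : inord 0 = i0. Proof. by apply: val_inj; rewrite /= inordK. Qed.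
Lemma inord_i1 : inord 1 = i1. Proof. by apply: val_inj; rewrite /= inordK. Qed.
Lemma inord_i2 : inord 2 = i2. Proof. by apply: val_inj; rewrite /= inordK. Qed.

Lemma big_ord3 (R : realType) (F : 'I_3 -> R) : \sum_(i < 3) F i = F i0 + F i1 + F i2.
Proof.
by rewrite !big_ord_recr big_ord0 /= add0r; congr (F _ + F _ + F _); apply: val_inj.
Qed.

Lemma cV3P (R : realType) (a b : 'cV[R]_3) :
  a i0 0 = b i0 0 -> a i1 0 = b i1 0 -> a i2 0 = b i2 0 -> a = b.
Proof.
move=> e0 e1 e2; apply/matrixP => i j; rewrite (ord1 j).
have [] : [\/ i = i0, i = i1 | i = i2].
  by case: i => [[|[|[|//]]] ?]; [constructor 1 | constructor 2 | constructor 3];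
    apply: val_inj.
all: by move=> ->.
Qed.

Lemma dotE (R : realType) (a b : 'cV[R]_3) :
  dot a b = a i0 0 * b i0 0 + a i1 0 * b i1 0 + a i2 0 * b i2 0.
Proof. exact: big_ord3. Qed.

Section CrossCoordinates.
Variables (R : realType) (a b : 'cV[R]_3).

Lemma cross_i0 : cross a b i0 0 = a i1 0 * b i2 0 - a i2 0 * b i1 0.
Proof. by rewrite /cross !mxE big_ord3 !mxE /c3 /= inord_i1 inord_i2; ring. Qed.
Lemma cross_i1 : cross a b i1 0 = a i2 0 * b i0 0 - a i0 0 * b i2 0.
Proof. by rewrite /cross !mxE big_ord3 !mxE /c3 /= inord_i0 inord_i2; ring. Qed.
Lemma cross_i2 : cross a b i2 0 = a i0 0 * b i1 0 - a i1 0 * b i0 0.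
Proof. by rewrite /cross !mxE big_ord3 !mxE /c3 /= inord_i0 inord_i1; ring. Qed.

End CrossCoordinates.

Ltac unfold_coords := rewrite ?(dotE, cross_i0, cross_i1, cross_i2, mxE).
Ltac cV3_ring := apply: cV3P; unfold_coords; ring.

Section VectorAlgebra.
Variable R : realType.
Implicit Types (a b c d u v : 'cV[R]_3).

Lemma dotC a b : dot a b = dot b a. Proof. unfold_coords; ring. Qed.
Lemma dotDr a b c : dot a (b + c) = dot a b + dot a c. Proof. unfold_coords; ring. Qed.
Lemma dotDl a b c : dot (a + b) c = dot a c + dot b c. Proof. unfold_coords; ring. Qed.
Lemma dotZl k a b : dot (k *: a) b = k * dot a b. Proof. unfold_coords; ring. Qed.
Lemma dotZr k a b : dot a (k *: b) = k * dot a b. Proof. unfold_coords; ring. Qed.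

Lemma crossDr a b c : cross a (b + c) = cross a b + cross a c. Proof. cV3_ring. Qed.
Lemma crossDl a b c : cross (a + b) c = cross a c + cross b c. Proof. cV3_ring. Qed.
Lemma crossZl k a b : cross (k *: a) b = k *: cross a b. Proof. cV3_ring. Qed.
Lemma crossZr k a b : cross a (k *: b) = k *: cross a b. Proof. cV3_ring. Qed.
Lemma crossvv a : cross a a = 0. Proof. cV3_ring. Qed.
Lemma crossv0 a : cross a 0 = 0. Proof. exact: mulmx0. Qed.
Lemma cross0v a : cross 0 a = 0. Proof. cV3_ring. Qed.

Lemma dot_crossl a b : dot (cross a b) a = 0. Proof. unfold_coords; ring. Qed.
Lemma dot_crossr a b : dot (cross a b) b = 0. Proof. unfold_coords; ring. Qed.

Lemma cross_crossr a b c : cross a (cross b c) = dot a c *: b - dot a b *: c.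
Proof. cV3_ring. Qed.
Lemma cross_crossl a b c : cross (cross a b) c = dot a c *: b - dot b c *: a.
Proof. cV3_ring. Qed.

Lemma cross_span2 x y x' y' a b :
  cross (x *: a + y *: b) (x' *: a + y' *: b) = (x * y' - y * x') *: cross a b.
Proof. cV3_ring. Qed.

Lemma dotvv_ge0 a : 0 <= dot a a.
Proof. by rewrite dotE -!expr2 !addr_ge0 ?sqr_ge0. Qed.

Lemma dotvv_eq0 a : (dot a a == 0) = (a == 0).
Proof.
apply/eqP/eqP => [|->]; last by rewrite dotE !mxE !mulr0 !addr0.
move/eqP; rewrite dotE -!expr2 !paddr_eq0 ?addr_ge0 ?sqr_ge0 // !sqrf_eq0.
by case/andP=> /andP[/eqP a0 /eqP a1] /eqP a2; apply: cV3P; rewrite mxE.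
Qed.

Lemma vnorm_sqr a : vnorm a ^+ 2 = dot a a.
Proof. exact/sqr_sqrtr/dotvv_ge0. Qed.

Lemma vnorm_eq0 a : (vnorm a == 0) = (a == 0).
Proof. by rewrite /vnorm sqrtr_eq0 le_eqVlt ltNge dotvv_ge0 orbF dotvv_eq0. Qed.

Lemma span_ortho_eq0 s t a b :
  dot (s *: a + t *: b) a = 0 -> dot (s *: a + t *: b) b = 0 -> s *: a + t *: b = 0.
Proof.
set m := s *: a + t *: b => ma mb; apply/eqP; rewrite -dotvv_eq0.
by rewrite {2}/m dotDr !dotZr ma mb !mulr0 addr0.
Qed.

Lemma cross_neq0_free s t a b : cross a b != 0 -> s *: a + t *: b = 0 -> s = 0.
Proof.
move=> ab0 /(congr1 (fun v => cross v b)).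
rewrite crossDl !crossZl crossvv scaler0 addr0.
by rewrite cross0v => /eqP; rewrite scaler_eq0 (negPf ab0) orbF => /eqP.
Qed.

Lemma parallel_cross_eq0 c d : c != 0 -> cross c d = 0 -> parallel d c.
Proof.
move=> c0 cd0; have := cross_crossr c c d; rewrite cd0 crossv0 => /eqP.
rewrite eq_sym subr_eq0 => /eqP cdc; exists ((dot c c)^-1 * dot c d).
by rewrite -scalerA cdc scalerA mulVf ?scale1r ?dotvv_eq0.
Qed.

Lemma ortho2_parallel_cross a b d :
  cross a b != 0 -> dot d a = 0 -> dot d b = 0 -> parallel d (cross a b).
Proof.
move=> ab0 da db; apply: parallel_cross_eq0 => //.
by rewrite cross_crossl dotC da dotC db !scale0r subr0.
Qed.

Lemma parallel_common_dir u c d :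
  parallel u c -> parallel d c -> d != 0 -> parallel u d.
Proof.
move=> [k ->] [l dl] d0.
have l0 : l != 0 by apply: contraNneq d0; rewrite dl => ->; rewrite scale0r.
by exists (k / l); rewrite dl scalerA divfK.
Qed.

Lemma on_line_sub q d x y : on_line q d x -> on_line q d y -> parallel (x - y) d.
Proof. by move=> [s ->] [t ->]; exists (s - t); apply: cV3P; rewrite !mxE; ring. Qed.

End VectorAlgebra.

Section CommonNormal.
Variables (R : realType) (q1 d1 q2 d2 P n : 'cV[R]_3).
Hypotheses (d12 : cross d1 d2 != 0) (P_on1 : on_line q1 d1 P)
  (Pn_on2 : on_line q2 d2 (P + n)) (n_par : parallel n (cross d1 d2)).

Lemma common_normal_cross : common_normal q1 d1 q2 d2 P (cross d1 d2).
Proof.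
split; rewrite ?dot_crossl ?dot_crossr //.
  by exists P; split => //; exists 0; rewrite scale0r addr0.
by exists (P + n); split => //; case: n_par => l ->; exists l.
Qed.

Lemma common_normal_through q d : common_normal q1 d1 q2 d2 q d -> on_line q d P.
Proof.
case=> _ dd1 dd2 [X [X_on1 X_on]] [Y [Y_on2 Y_on]].
have [s Xs] := on_line_sub X_on1 P_on1.
have [t Yt] := on_line_sub Y_on2 Pn_on2.
have [k XY] := on_line_sub X_on Y_on.
have [l nl] := n_par.
have st : s *: d1 + (- t) *: d2 = k *: d + l *: cross d1 d2.
  by rewrite scaleNr -Xs -Yt -XY -nl; apply: cV3P; rewrite !mxE; ring.
have s0 : s = 0.
  apply: (cross_neq0_free (t := - t) d12); apply: span_ortho_eq0;
    rewrite st dotDl !dotZl.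
    by rewrite dd1 dot_crossl !mulr0 addr0.
  by rewrite dd2 dot_crossr !mulr0 addr0.
by move: Xs; rewrite s0 scale0r => /eqP; rewrite subr_eq0 => /eqP <-.
Qed.

End CommonNormal.

Lemma common_normal_parallel (R : realType) (q1 d1 q2 d2 q d u : 'cV[R]_3) :
  cross d1 d2 != 0 -> dot u d1 = 0 -> dot u d2 = 0 ->
  common_normal q1 d1 q2 d2 q d -> parallel u d.
Proof.
move=> d12 ud1 ud2 [d0 dd1 dd2 _ _].
exact: parallel_common_dir (ortho2_parallel_cross d12 ud1 ud2)
  (ortho2_parallel_cross d12 dd1 dd2) d0.
Qed.

Section ScrewAxis.
Variable R : realType.
Implicit Types (a p v : 'cV[R]_3).

Lemma axis_dirZ k a : 0 < k -> axis_dir (k *: a) = axis_dir a.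
Proof.
move=> k0; rewrite /axis_dir /vnorm dotZl dotZr mulrA -expr2.
rewrite sqrtrM ?sqr_ge0 // sqrtr_sqr gtr0_norm // invfM scalerA mulrAC mulVf ?mul1r //.
exact: lt0r_neq0.
Qed.

Lemma axis_dir_unit a : dot a a = 1 -> axis_dir a = a.
Proof. by rewrite /axis_dir /vnorm => ->; rewrite sqrtr1 invr1 scale1r. Qed.

Lemma cross_axis_dir_neq0 a b : cross a b != 0 -> cross (axis_dir a) (axis_dir b) != 0.
Proof.
move=> ab0; rewrite /axis_dir crossZl crossZr scalerA scaler_eq0 negb_or ab0 andbT.
rewrite mulf_neq0 // invr_eq0 vnorm_eq0; apply: contraNneq ab0 => ->.
  by rewrite cross0v.
by rewrite crossv0.
Qed.

Lemma on_screw_axis a p v : a != 0 ->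
  on_line (axis_point a (cross p a + v)) (axis_dir a) (p + (dot a a)^-1 *: cross a v).
Proof.
rewrite -vnorm_eq0 => a0; exists (dot a p / vnorm a).
rewrite /axis_point /axis_dir crossDr cross_crossr -!vnorm_sqr.
set w := cross a v; apply: cV3P; rewrite !mxE; field; exact: a0.
Qed.

End ScrewAxis.

Section ScrewTransformation.
Variable R : realType.
Implicit Types (M U : 'M[R]_3) (p w : 'cV[R]_3).

Lemma col_usubmx_screw M p n (A B : 'M[R]_(3, n)) j :
  col j (usubmx (screw_mx M p *m col_mx A B)) = M *m col j A.
Proof. by rewrite mul_block_col col_mxKu mul0mx addr0 !colE mulmxA. Qed.

Lemma col_dsubmx_screw M p n (A B : 'M[R]_(3, n)) j :
  col j (dsubmx (screw_mx M p *m col_mx A B)) = cross p (M *m col j A) + M *m col j B.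
Proof. by rewrite mul_block_col col_mxKd linearD /= !colE /cross !mulmxA. Qed.

Lemma mulmx_cV3 M w :
  M *m w = w i0 0 *: col i0 M + w i1 0 *: col i1 M + w i2 0 *: col i2 M.
Proof. by apply: cV3P; rewrite !mxE big_ord3 ?mxE; ring. Qed.

Lemma mulmx_col0_upper M U : upper_tri U -> M *m col i0 U = U i0 i0 *: col i0 M.
Proof.
by move=> U_up; rewrite mulmx_cV3 !mxE (U_up i1 i0) ?(U_up i2 i0) // !scale0r !addr0.
Qed.

Lemma mulmx_col1_upper M U : upper_tri U ->
  M *m col i1 U = U i0 i1 *: col i0 M + U i1 i1 *: col i1 M.
Proof. by move=> U_up; rewrite mulmx_cV3 !mxE (U_up i2 i1) // scale0r addr0. Qed.

Lemma dot_col_orthogonal M i j :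
  M^T *m M = 1%:M -> dot (col i M) (col j M) = (i == j)%:R.
Proof.
move/(congr1 (fun A : 'M[R]_3 => A i j)); rewrite !mxE => <-.
by apply: eq_bigr => k _; rewrite !mxE.
Qed.

End ScrewTransformation.

Section SUDecomposition.
Variables (R : realType) (M U1 U2 : 'M[R]_3) (p : 'cV[R]_3).
Hypotheses (M_orth : M^T *m M = 1%:M) (U1_up : upper_tri U1) (U2_up : upper_tri U2).

Local Notation Xi := (screw_mx M p *m col_mx U1 U2).
Local Notation alpha j := (col j (usubmx Xi)).
Local Notation beta j := (col j (dsubmx Xi)).
Local Notation r j := (col j M).

Let rr i j : dot (r i) (r j) = (i == j)%:R := dot_col_orthogonal i j M_orth.

Let alpha0E : alpha i0 = U1 i0 i0 *: r i0.
Proof. by rewrite col_usubmx_screw mulmx_col0_upper. Qed.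

Let alpha1E : alpha i1 = U1 i0 i1 *: r i0 + U1 i1 i1 *: r i1.
Proof. by rewrite col_usubmx_screw mulmx_col1_upper. Qed.

Lemma SU_first_axis : 0 < U1 i0 i0 ->
  axis_dir (alpha i0) = r i0 /\
  on_line (axis_point (alpha i0) (beta i0)) (axis_dir (alpha i0)) p.
Proof.
move=> u0; have alpha0_neq0 : alpha i0 != 0.
  by rewrite -dotvv_eq0 alpha0E dotZl dotZr rr mulr1 mulf_neq0 ?lt0r_neq0.
split; first by rewrite alpha0E axis_dirZ // axis_dir_unit // rr.
have := on_screw_axis p (U2 i0 i0 *: r i0) alpha0_neq0.
rewrite [in cross (alpha i0) _]alpha0E crossZl crossZr crossvv !scaler0 addr0.
by rewrite col_dsubmx_screw (mulmx_col0_upper _ U2_up) col_usubmx_screw.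
Qed.

Lemma SU_second_axis : alpha i1 != 0 ->
  exists2 n, on_line (axis_point (alpha i1) (beta i1)) (axis_dir (alpha i1)) (p + n)
    & dot n (r i0) = 0 /\ dot n (alpha i1) = 0.
Proof.
set v := U2 i0 i1 *: r i0 + U2 i1 i1 *: r i1 => alpha1_neq0.
exists ((dot (alpha i1) (alpha i1))^-1 *: cross (alpha i1) v).
  have := on_screw_axis p v alpha1_neq0.
  by rewrite col_dsubmx_screw (mulmx_col1_upper _ U2_up) col_usubmx_screw.
by rewrite !dotZl dot_crossl alpha1E cross_span2 dotZl dot_crossl !mulr0.
Qed.

Lemma SU_third_column_ortho : dot (r i2) (r i0) = 0 /\ dot (r i2) (alpha i1) = 0.
Proof. by rewrite alpha1E dotDr !dotZr !rr !mulr0 addr0. Qed.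

End SUDecomposition.

Theorem mainTheorem3 (R : realType) (Xi : 'M[R]_(3 + 3, 3))
    (Rm : 'M[R]_3) (p : 'cV[R]_3) (U1 U2 : 'M[R]_3) :
  let alpha (j : 'I_3) := col j (usubmx Xi) in
  let beta (j : 'I_3) := col j (dsubmx Xi) in
  vnorm (alpha i0) != 0 ->
  cross (alpha i0) (alpha i1) != 0 ->
  is_SO3 Rm -> upper_tri U1 -> upper_tri U2 ->
  0 < U1 i0 i0 -> 0 < U1 i1 i1 ->
  Xi = screw_mx Rm p *m col_mx U1 U2 ->
  let r (j : 'I_3) := col j Rm in
  let q1 := axis_point (alpha i0) (beta i0) in
  let e1 := axis_dir (alpha i0) in
  let q2 := axis_point (alpha i1) (beta i1) in
  let e2 := axis_dir (alpha i1) in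
  [/\ (* (1) *) parallel (r i0) e1,
      (* (2) *) (exists q d, common_normal q1 e1 q2 e2 q d) /\
                (forall q d, common_normal q1 e1 q2 e2 q d -> parallel (r i2) d),
      (* (3) *) on_line q1 e1 p
    & (* (4) *) forall q d, common_normal q1 e1 q2 e2 q d ->
                  on_line q1 e1 p /\ on_line q d p].
Proof.
move=> alpha beta _ a01 [M_orth _] U1_up U2_up u0 _ Xi_def r q1 e1 q2 e2.
subst Xi.
have [e1r p_on1] : e1 = r i0 /\ on_line q1 e1 p :=
  SU_first_axis p M_orth U1_up U2_up u0.
have alpha1_neq0 : alpha i1 != 0 by apply: contraNneq a01 => ->; rewrite crossv0.
have [n pn_on2 [n_r0 n_alpha1]] : exists2 n, on_line q2 e2 (p + n)
    & dot n (r i0) = 0 /\ dot n (alpha i1) = 0 :=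
  SU_second_axis U1_up U2_up alpha1_neq0.
have [r2_r0 r2_alpha1] : dot (r i2) (r i0) = 0 /\ dot (r i2) (alpha i1) = 0 :=
  SU_third_column_ortho U2 p M_orth U1_up.
have e12 : cross e1 e2 != 0 := cross_axis_dir_neq0 a01.
have ortho_e2 u : dot u (alpha i1) = 0 -> dot u e2 = 0.
  by rewrite /e2 /axis_dir dotZr => ->; rewrite mulr0.
have n_par : parallel n (cross e1 e2).
  by apply: (ortho2_parallel_cross e12); rewrite ?e1r ?ortho_e2.
split => //.
- by rewrite e1r; exists 1; rewrite scale1r.
- split; last first.
    by move=> q d; apply: (common_normal_parallel e12); rewrite ?e1r ?ortho_e2.
  by exists p, (cross e1 e2); exact: (common_normal_cross e12 p_on1 pn_on2 n_par).
- move=> q d cn; split=> //; exact: (common_normal_through e12 p_on1 pn_on2 n_par cn).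
Qed.
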